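(* (i) If the communicated systems are qubits composed according to quantum theory (i.e. $k$ qubits form the quantum system on $(\mathbb{C}^2)^{\otimes k}$), then the game $\mathcal{P}_D^{[12]}$ cannot be won perfectly with $3$ qubits but can be won perfectly with $4$ qubits; hence $4$ qubits of communication are required. (ii) In the $SEP$ composition $\mathbb{C}^2\otimes_{\min}\mathbb{C}^2$ of two qubits, the twelve product states $$\mathcal{A}=\{|\kappa\kappa\rangle,\ |\kappa\bar\kappa\rangle,\ |\bar\kappa\kappa\rangle,\ |\bar\kappa\bar\kappa\rangle\}_{\kappa\in\{x,y,z\}}$$ (as density operators) are pairwise distinguishable; consequently two $SEP$-bits suffice to win $\mathcal{P}_D^{[12]}$ perfectly.
   Context: A quantum system on Hilbert space $\mathcal{H}$ has states the density operators on $\mathcal{H}$ and measurements the POVMs. $SEP$ composition of $m$ qubits ($m$ ''$SEP$-bits''; for $m=2$ written $\mathbb{C}^2\otimes_{\min}\mathbb{C}^2$): the state cone is the set of finite sums of tensor products $\pi_1\otimes\cdots\otimes\pi_m$ of positive semidefinite operators on $\mathbb{C}^2$; normalized states are the fully separable density operators on $(\mathbb{C}^2)^{\otimes m}$; the effect cone is its dual $\{Y \text{ Hermitian}: \operatorname{Tr}(XY)\ge 0 \text{ for all } X \text{ in the state cone}\}$; a measurement is a finite family of elements of the dual cone summing to the identity, with outcome probabilities $\operatorname{Tr}(E_i\rho)$. A set of states $\{\omega_i\}$ is pairwise distinguishable if for every $i\neq j$ there is a two-outcome measurement $\{E,\mathbf 1-E\}$ with $\operatorname{Tr}(E\omega_i)=1$,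 $\operatorname{Tr}(E\omega_j)=0$. Here $|\alpha\beta\rangle=|\alpha\rangle\otimes|\beta\rangle$ and $|\kappa\rangle$ ($|\bar\kappa\rangle$) is the eigenvector of the Pauli operator $\sigma_\kappa$ with eigenvalue $+1$ ($-1$). The game $\mathcal{P}_D^{[n]}$: a referee gives Alice a message $\eta$ from a set $\mathcal{N}$, $|\mathcal{N}|=n$, and asks Bob whether Alice's message was $\eta$ or $\eta'$ for some $\eta'\neq\eta$; Alice and Bob share no correlations, Alice encodes $\eta$ into a state $\omega_\eta$ of the communicated system and sends it to Bob, who for each unordered pair $\{\eta,\eta'\}$ performs a measurement whose outcome is his answer; perfect winning means Bob answers correctly with probability $1$ for every $\eta$ and every $\eta'\neq\eta$. *)

(* complex matrices over an arbitrary numClosedFieldType C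
   (an algebraically closed field with conjugation, e.g. C = R[i]). *)
From HB Require Import structures.
From mathcomp Require Import all_boot all_order all_algebra.
From mathcomp Require Import mxtens.
Set Implicit Arguments. Unset Strict Implicit. Unset Printing Implicit Defensive.
Import Order.TTheory GRing.Theory Num.Theory.
Local Open Scope ring_scope.

Section QDefs.
Variable C : numClosedFieldType.

Definition hadj m n (A : 'M[C]_(m, n)) : 'M[C]_(n, m) := (map_mx Num.conj A)^T.

Definition hermitian n (A : 'M[C]_n) : Prop := hadj A = A.

Definition psd n (A : 'M[C]_n) : Prop :=
  hermitian A /\ forall v : 'cV[C]_n, 0 <= (hadj v *m A *m v) 0 0.

Definition density n (A : 'M[C]_n) : Prop := psd A /\ \tr A = 1.

Definition prob n (E rho : 'M[C]_n) : C := \tr (E *m rho).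

Definition q_state d (A : 'M[C]_d) : Prop := density A.
Definition q_effect d (A : 'M[C]_d) : Prop := psd A.

Definition sep2_cone (X : 'M[C]_(2 * 2)) : Prop :=
  exists (m : nat) (A B : 'I_m -> 'M[C]_2),
    (forall i, psd (A i) /\ psd (B i)) /\ X = \sum_(i < m) tensmx (A i) (B i).
Definition sep2_state (X : 'M[C]_(2 * 2)) : Prop := sep2_cone X /\ \tr X = 1.
Definition sep2_effect (Y : 'M[C]_(2 * 2)) : Prop :=
  hermitian Y /\ forall X, sep2_cone X -> 0 <= \tr (X *m Y).

Definition measurement d (effect : 'M[C]_d -> Prop) (I : finType)
  (E : I -> 'M[C]_d) : Prop :=
  (forall i, effect (E i)) /\ \sum_i E i = 1%:M.

Definition pairwise_distinguishable d (effect : 'M[C]_d -> Prop) (I : finType)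
  (w : I -> 'M[C]_d) : Prop :=
  forall i j, i != j -> exists E : 'M[C]_d,
    measurement effect (fun b : bool => if b then E else 1%:M - E) /\
    prob E (w i) = 1 /\ prob E (w j) = 0.

(* Perfect winning of the game P_D^[n]: Alice encodes each message
   eta in 'I_n into a state omega eta; for each unordered pair {i, j}
   (i < j) Bob performs a two-outcome measurement with outcomes
   true = "the message was i", false = "the message was j", and answers
   correctly with probability 1 whichever of i, j was sent. *)
Definition wins_PD (n d : nat) (state effect : 'M[C]_d -> Prop) : Prop :=
  exists omega : 'I_n -> 'M[C]_d,
    (forall i, state (omega i)) /\
    forall i j : 'I_n, (i < j)%N -> exists E : bool -> 'M[C]_d,
      measurement effect E /\
      prob (E true) (omega i) = 1 /\ prob (E false) (omega j) = 1.

(* k qubits in quantum theory: the quantum system on (C^2)^{(x)k} = C^(2^k) *)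
Definition wins_PD_qubits (n k : nat) : Prop :=
  wins_PD n (@q_state (2 ^ k)) (@q_effect (2 ^ k)).

Definition wins_PD_sep2 (n : nat) : Prop :=
  wins_PD n sep2_state sep2_effect.

Inductive axis := ax_x | ax_y | ax_z.

Definition pauli (k : axis) : 'M[C]_2 :=
  match k with
  | ax_x => \matrix_(i < 2, j < 2) (if i == j then 0 else 1)
  | ax_y => \matrix_(i < 2, j < 2)
      (if i == j then 0 else if (i == 0 :> nat) then - 'i else 'i)
  | ax_z => \matrix_(i < 2, j < 2)
      (if i == j then (if (i == 0 :> nat) then 1 else -1) else 0)
  end.

(* ket k s : the (normalized) eigenvector of pauli k with eigenvalue
   +1 (s = false, |k>) or -1 (s = true, |k bar>) *)
Definition ket (k : axis) (s : bool) : 'cV[C]_2 :=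
  let r := (2.-root (2 : C))^-1 in
  match k with
  | ax_z => \col_(i < 2) (if (i == 0 :> nat) then (~~ s)%:R else s%:R)
  | ax_x => \col_(i < 2) (if (i == 0 :> nat) then r else (if s then - r else r))
  | ax_y => \col_(i < 2) (if (i == 0 :> nat) then r
                           else (if s then - ('i * r) else 'i * r))
  end.

Definition prod_ket (k : axis) (s1 s2 : bool) : 'M[C]_(2 * 2, 1 * 1) :=
  tensmx (ket k s1) (ket k s2).
Definition stateA (k : axis) (s1 s2 : bool) : 'M[C]_(2 * 2) :=
  prod_ket k s1 s2 *m hadj (prod_ket k s1 s2).

End QDefs.

Definition axis_of (i : 'I_3) : axis :=
  match val i with 0 => ax_x | 1 => ax_y | _ => ax_z end.

(* the family A of twelve product states |kk>, |k kbar>, |kbar k>, |kbar kbar>,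
   k in {x,y,z}, indexed by (axis, first bar?, second bar?) *)
Definition familyA (C : numClosedFieldType) (p : 'I_3 * bool * bool) : 'M[C]_(2 * 2) :=
  stateA C (axis_of p.1.1) p.1.2 p.2.

(* Let {E, 1 - E} be the measurement Bob uses for the pair (i, j),
   so that tr(E ω_i) = 1 and tr((1 - E) ω_j) = 1.  Then tr((1 - E) ω_i) = 0
   and tr(E ω_j) = 0, and since the trace of a product of two positive
   semidefinite matrices vanishes only if the product does (a consequence of
   the spectral theorem), ω_i ω_j = 0.  Pairwise orthogonal density matrices
   on C^d are at most d in number (a choice of nonzero diagonal entries gives
   a nonsingular n x n Gram matrix of rank at most d), and the d projectors
   onto the standard basis vectors attain the bound.  Hence k qubits win
   P_D^[n] exactly when n <= 2^k, and for n = 12 this means k >= 4.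

   The eigenprojectors of a Pauli matrix have the Bloch form
   |k±><k±| = (1 ± σ_k)/2.  If M is Hermitian on C^2 (x) C^2 and
   tr((A (x) B)(1 + M)) >= 0 for all positive semidefinite A and B, then
   (1 + M)/2 is an effect of the SEP composition.  By the Bloch-ball
   inequality tr(Aσ_x)^2 + tr(Aσ_y)^2 + tr(Aσ_z)^2 <= (tr A)^2 for positive
   semidefinite A, the observables ±σ_k (x) 1, ±1 (x) σ_k and
   ±(σ_k (x) σ_k - σ_k' (x) σ_k') for k <> k' have this property; they take
   the values ±1 on the twelve states of A in a way that separates every
   pair.  Finally, any pairwise distinguishable family of n normalized states
   is a perfect strategy for P_D^[n]. *)

From Pilot Require Import Defs.
From mathcomp Require Import all_boot all_order all_algebra.
From mathcomp Require Import mxtens ring.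
From mathcomp Require spectral.
Set Implicit Arguments. Unset Strict Implicit. Unset Printing Implicit Defensive.
Import Order.TTheory GRing.Theory Num.Theory Num.Def.
Local Open Scope ring_scope.

Section ConjugateTranspose.
Variable C : numClosedFieldType.

(* Conjugation of opposites and products, stated with the head symbol conjC
   used by the library lemmas such as conjCi. *)
Lemma conjCN (x : C) : conjC (- x) = - conjC x. Proof. exact: rmorphN. Qed.
Lemma conjCM (x y : C) : conjC (x * y) = conjC x * conjC y. Proof. exact: rmorphM. Qed.

Lemma hadjE m n (A : 'M[C]_(m, n)) i j : hadj A i j = conjC (A j i).
Proof. by rewrite /hadj !mxE. Qed.

Lemma hadjK m n (A : 'M[C]_(m, n)) : hadj (hadj A) = A.
Proof. by apply/matrixP=> i j; rewrite !hadjE conjCK. Qed.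

Lemma hadjM m n p (A : 'M[C]_(m, n)) (B : 'M[C]_(n, p)) :
  hadj (A *m B) = hadj B *m hadj A.
Proof.
apply/matrixP=> i j; rewrite hadjE !mxE rmorph_sum; apply: eq_bigr => k _.
by rewrite rmorphM !hadjE mulrC.
Qed.

Lemma hadjD m n (A B : 'M[C]_(m, n)) : hadj (A + B) = hadj A + hadj B.
Proof. by apply/matrixP=> i j; rewrite !(hadjE, mxE) rmorphD. Qed.

Lemma hadjN m n (A : 'M[C]_(m, n)) : hadj (- A) = - hadj A.
Proof. by apply/matrixP=> i j; rewrite !(hadjE, mxE) rmorphN. Qed.

Lemma hadjZ m n c (A : 'M[C]_(m, n)) : hadj (c *: A) = conjC c *: hadj A.
Proof. by apply/matrixP=> i j; rewrite !(hadjE, mxE) rmorphM. Qed.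

Lemma hadj1 n : hadj (1%:M : 'M[C]_n) = 1%:M.
Proof.
apply/matrixP=> i j; rewrite !(hadjE, mxE) eq_sym.
by case: (i == j); rewrite ?rmorph1 ?rmorph0.
Qed.

Lemma hadj0 m n : hadj (0 : 'M[C]_(m, n)) = 0.
Proof. by apply/matrixP=> i j; rewrite !(hadjE, mxE) rmorph0. Qed.

Lemma hadj_tens m n p q (A : 'M[C]_(m, n)) (B : 'M[C]_(p, q)) :
  hadj (A *t B) = hadj A *t hadj B.
Proof. by apply/matrixP=> i j; rewrite !(hadjE, mxE) rmorphM. Qed.

Lemma tr_hadj n (A : 'M[C]_n) : \tr (hadj A) = conjC (\tr A).
Proof. by rewrite /mxtrace rmorph_sum; apply: eq_bigr => i _; rewrite hadjE. Qed.

Lemma hermitian_entry n (A : 'M[C]_n) i j : Defs.hermitian A -> conjC (A j i) = A i j.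
Proof. by move=> hA; rewrite -hadjE hA. Qed.

Lemma trmxC_hadj m n (A : 'M[C]_(m, n)) : (A ^t* )%sesqui = hadj A.
Proof. by rewrite /hadj map_trmx. Qed.

End ConjugateTranspose.

Section Positivity.
Variable C : numClosedFieldType.

Definition qform n (A : 'M[C]_n) (v : 'cV[C]_n) : C := (hadj v *m A *m v) 0 0.

Lemma qformE n (A : 'M[C]_n) v :
  qform A v = \sum_i \sum_j conjC (v i 0) * A i j * v j 0.
Proof.
rewrite /qform mxE [RHS]exchange_big /=; apply: eq_bigr => j _.
rewrite mxE mulr_suml; apply: eq_bigr => i _; by rewrite hadjE.
Qed.

Lemma qform_col n (A Q : 'M[C]_n) k : (hadj Q *m A *m Q) k k = qform A (col k Q).
Proof.
rewrite qformE mxE [RHS]exchange_big /=; apply: eq_bigr => j _.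
rewrite mxE mulr_suml; apply: eq_bigr => i _; by rewrite hadjE !mxE.
Qed.

Lemma normsq_ge0 n (y : 'cV[C]_n) : 0 <= (hadj y *m y) 0 0.
Proof. by rewrite mxE sumr_ge0 // => i _; rewrite hadjE mulrC mul_conjC_ge0. Qed.

Lemma normsq_eq0 n (y : 'cV[C]_n) : (hadj y *m y) 0 0 = 0 -> y = 0.
Proof.
rewrite mxE => y0; apply/matrixP => i j; rewrite ord1 mxE.
have ge0 (k : 'I_n) : xpredT k -> 0 <= hadj y 0 k * y k 0.
  by move=> _; rewrite hadjE mulrC mul_conjC_ge0.
have := psumr_eq0P ge0 y0 (i := i) isT.
by rewrite hadjE mulrC => /eqP; rewrite mul_conjC_eq0 => /eqP.
Qed.

Lemma qform_real_comb n (A : 'M[C]_n) (q y : 'cV[C]_n) (a b : C) :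
  conjC a = a -> conjC b = b ->
  qform A (a *: q + b *: y) = a ^+ 2 * qform A q
     + a * b * ((hadj q *m A *m y) 0 0 + (hadj y *m A *m q) 0 0)
     + b ^+ 2 * qform A y.
Proof.
move=> ra rb; rewrite /qform hadjD !hadjZ ra rb.
rewrite !(mulmxDl, mulmxDr) -!scalemxAl -!scalemxAr !scalerA !mxE.
ring.
Qed.

(* A positive semidefinite matrix annihilates every vector on which its
   quadratic form vanishes: with y = A q and N = |y|^2, positivity at
   (a + 1) q - N y, a = y* A y, forces N^2 (a + 2) <= 0, hence N = 0. *)
Lemma psd_qform_eq0 n (A : 'M[C]_n) (q : 'cV[C]_n) :
  psd A -> qform A q = 0 -> A *m q = 0.
Proof.
move=> hA hq; set y := A *m q.
set N : C := (hadj y *m y) 0 0; set a : C := qform A y.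
have N0 : 0 <= N by apply: normsq_ge0.
have a0 : 0 <= a by apply: hA.2.
have qAy : (hadj q *m A *m y) 0 0 = N by rewrite /N /y hadjM hA.1 mulmxA.
have yAq : (hadj y *m A *m q) 0 0 = N by rewrite /N -mulmxA.
have := hA.2 ((a + 1) *: q + (- N) *: y).
rewrite -/(qform A _) qform_real_comb ?hq -/a ?qAy ?yAq; first last.
- by apply: conj_Creal; rewrite realN ger0_real.
- by apply: conj_Creal; rewrite realD ?real1 ?ger0_real.
have -> : (a + 1) ^+ 2 * 0 + (a + 1) * - N * (N + N) + (- N) ^+ 2 * a
   = - (N ^+ 2 * (a + 2)) by ring.
rewrite oppr_ge0 => le0.
have ge0 : 0 <= N ^+ 2 * (a + 2) by rewrite mulr_ge0 ?exprn_ge0 // addr_ge0.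
have /eqP : N ^+ 2 * (a + 2) = 0 by apply/eqP; rewrite eq_le le0 ge0.
rewrite mulf_eq0 expf_eq0 /= => /orP[/eqP /normsq_eq0 // | /eqP a2].
by have := ltr_wpDl a0 (ltr0Sn C 1); rewrite a2 ltxx.
Qed.

Lemma psd_rank1 n (u : 'cV[C]_n) : psd (u *m hadj u).
Proof.
split; first by rewrite /Defs.hermitian hadjM hadjK.
move=> v; have -> : hadj v *m (u *m hadj u) *m v
    = hadj (hadj u *m v) *m (hadj u *m v) by rewrite hadjM hadjK !mulmxA.
exact: normsq_ge0.
Qed.

Lemma psd_diag n (d : 'rV[C]_n) : (forall i, 0 <= d 0 i) -> psd (diag_mx d).
Proof.
move=> d0; split.
  apply/matrixP => i j; rewrite hadjE !mxE eq_sym.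
  case: eqVneq => [->|]; rewrite ?mulr1n ?mulr0n ?rmorph0 //.
  by apply: conj_Creal; apply: ger0_real.
move=> v; rewrite mul_mx_diag mxE sumr_ge0 // => j _; rewrite mxE hadjE.
by rewrite mulrAC mulrC mulr_ge0 // mulrC mul_conjC_ge0.
Qed.

End Positivity.

Section Orthogonality.
Variable C : numClosedFieldType.

(* If A and W are positive semidefinite and tr(A W) = 0 then A W = 0.
   Diagonalize W = Q diag(d) Q' with Q unitary and Q' its adjoint; then
   tr(A W) = sum_k d_k q_A(col_k Q) is a sum of nonnegative terms, so every
   column of Q with d_k <> 0 lies in the kernel of A. *)
Lemma psd_trace_mul_eq0 n (A W : 'M[C]_n) : psd A -> psd W -> \tr (A *m W) = 0 ->
  A *m W = 0.
Proof.
move=> hA hW trAW.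
have : W \is spectral.normalmx.
  by apply/spectral.normalmxP; rewrite trmxC_hadj hW.1.
move=> /spectral.orthomx_spectralP.
set P := spectral.spectralmx W; set d := spectral.spectral_diag W => eW.
have Pu : P \is spectral.unitarymx by apply: spectral.spectral_unitarymx.
rewrite spectral.invmx_unitary // trmxC_hadj in eW.
set Q := hadj P in eW.
have PQ : P *m Q = 1%:M by have /spectral.unitarymxP := Pu; rewrite trmxC_hadj.
have QP : hadj Q = P by rewrite /Q hadjK.
have dE k : d 0 k = qform W (col k Q).
  rewrite -qform_col QP eW !mulmxA PQ mul1mx -!mulmxA PQ mulmx1.
  by rewrite mxE eqxx mulr1n.
have trE : \tr (A *m W) = \sum_k qform A (col k Q) * d 0 k.
  rewrite eW !mulmxA mxtrace_mulC !mulmxA -QP mul_mx_diag /mxtrace.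
  by apply: eq_bigr => k _; rewrite mxE qform_col.
have ge0 (k : 'I_n) : xpredT k -> 0 <= qform A (col k Q) * d 0 k.
  by move=> _; rewrite mulr_ge0 ?dE //; [apply: hA.2 | apply: hW.2].
rewrite trE in trAW.
have AQd : A *m Q *m diag_mx d = 0.
  apply/matrixP => a k; rewrite mul_mx_diag !mxE.
  have /eqP := psumr_eq0P ge0 trAW (i := k) isT.
  rewrite mulf_eq0 => /orP[/eqP /(psd_qform_eq0 hA) Aq0 | /eqP ->]; last first.
    by rewrite mulr0.
  have /matrixP /(_ a 0) := Aq0; rewrite !mxE => Aq_a.
  suff -> : \sum_j A a j * Q j k = 0 by rewrite mul0r.
  by rewrite -[RHS]Aq_a; apply: eq_bigr => j _; rewrite !mxE.
by rewrite eW !mulmxA AQd mul0mx.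
Qed.

(* Pairwise orthogonal Hermitian matrices of trace one on C^d are at most d
   in number: choosing for each ω_i an index f_i with ω_i(f_i, f_i) <> 0, the
   n x d matrix V with rows ω_i(-, f_i) has a diagonal nonsingular Gram
   matrix V V*, so n = rank V V' <= d. *)
Lemma orthogonal_family_card n d (w : 'I_n -> 'M[C]_d) :
  (forall i, Defs.hermitian (w i)) -> (forall i, \tr (w i) = 1) ->
  (forall i j, i != j -> w i *m w j = 0) -> (n <= d)%N.
Proof.
move=> herm tr1 orth.
have diag_nz i : exists k, w i k k != 0.
  apply/existsP; apply: contraT; rewrite negb_exists => /forallP w0.
  have := tr1 i; rewrite /mxtrace big1 => [/esym/eqP|k _]; first by rewrite oner_eq0.
  exact/eqP/negPn/w0.
have [f wf] := fin_all_exists diag_nz.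
pose V := \matrix_(i < n, k < d) w i k (f i).
have gramE i j : (V *m hadj V) i j = \sum_k w i k (f i) * conjC (w j k (f j)).
  by rewrite mxE; apply: eq_bigr => k _; rewrite hadjE !mxE.
have gram_diag : V *m hadj V = diag_mx (\row_i (V *m hadj V) i i).
  apply/matrixP => i j; rewrite [in RHS]mxE.
  case: (eqVneq j i) => [->|ij]; first by rewrite !mxE mulr1n.
  rewrite mulr0n gramE.
  have /matrixP /(_ (f j) (f i)) := orth j i (ij : j != i).
  rewrite !mxE => wji; rewrite -[RHS]wji; apply: eq_bigr => k _.
  by rewrite hermitian_entry // mulrC.
have gram_nz i : (V *m hadj V) i i != 0.
  rewrite gramE; apply/eqP => sum0.
  have ge0 (k : 'I_d) : xpredT k -> 0 <= w i k (f i) * conjC (w i k (f i)).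
    by move=> _; apply: mul_conjC_ge0.
  have /eqP := psumr_eq0P ge0 sum0 (i := f i) isT.
  by rewrite mul_conjC_eq0 (negbTE (wf i)).
have gram_unit : V *m hadj V \in unitmx.
  rewrite unitmxE gram_diag det_diag unitfE; apply/prodf_neq0 => i _.
  by rewrite mxE gram_nz.
rewrite -[n in (n <= _)%N](mxrank_unit gram_unit).
exact: leq_trans (mxrankM_maxl _ _) (rank_leq_col V).
Qed.

End Orthogonality.

Section Game.
Variable C : numClosedFieldType.

Lemma prob_compl d (E rho : 'M[C]_d) :
  \tr rho = 1 -> prob (1%:M - E) rho = 1 - prob E rho.
Proof. by move=> tr1; rewrite /prob mulmxBl mul1mx raddfB /= tr1. Qed.

Lemma measurement2_compl d (effect : 'M[C]_d -> Prop) (E : bool -> 'M[C]_d) :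
  measurement effect E -> E false = 1%:M - E true.
Proof. by move=> [_]; rewrite big_bool /= => <-; rewrite addrC addrK. Qed.

Lemma wins_of_distinguishable d (state effect : 'M[C]_d -> Prop) (I : finType)
    (w : I -> 'M[C]_d) n :
  (n <= #|I|)%N -> (forall i, state (w i)) -> (forall i, \tr (w i) = 1) ->
  pairwise_distinguishable effect w -> wins_PD n state effect.
Proof.
move=> le_nI state_w tr_w dist_w.
pose label (i : 'I_n) : I := enum_val (widen_ord le_nI i).
have label_inj : injective label.
  by move=> i j /enum_val_inj /(congr1 val) ij; apply: val_inj.
exists (fun i => w (label i)); split=> [i|i j lt_ij]; first exact: state_w.
have ne_ij : label i != label j.
  by rewrite (inj_eq label_inj) -val_eqE /= neq_ltn lt_ij.
have [E [meas [pi pj]]] := dist_w _ _ ne_ij.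
exists (fun b : bool => if b then E else 1%:M - E); split=> //; split=> //.
by rewrite prob_compl // pj subr0.
Qed.

End Game.

Section Qudits.
Variable C : numClosedFieldType.

(* In a perfect strategy with quantum systems the encoded states are
   pairwise orthogonal: the two effects of Bob's measurement for (i, j)
   have zero probability on ω_i and ω_j respectively, hence annihilate them. *)
Lemma perfect_strategy_orthogonal d n (w : 'I_n -> 'M[C]_d) (i j : 'I_n) :
  q_state (w i) -> q_state (w j) ->
  (exists E : bool -> 'M[C]_d, measurement (@q_effect C d) E /\
     prob (E true) (w i) = 1 /\ prob (E false) (w j) = 1) ->
  w i *m w j = 0.
Proof.
move=> [psd_i tr_i] [psd_j tr_j] [E [meas [pi pj]]].
have Ef := measurement2_compl meas.
have Et : E true = 1%:M - E false by rewrite Ef opprB addrC subrK.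
have Ef_i : E false *m w i = 0.
  apply: psd_trace_mul_eq0 psd_i _; first exact: meas.1.
  by have := prob_compl (E true) tr_i; rewrite -Ef pi subrr.
have Et_j : E true *m w j = 0.
  apply: psd_trace_mul_eq0 psd_j _; first exact: meas.1.
  by have := prob_compl (E false) tr_j; rewrite -Et pj subrr.
have w_Ef : w i *m E false = 0.
  by rewrite -psd_i.1 -(meas.1 false).1 -hadjM Ef_i hadj0.
have [_ sumE] := meas; rewrite big_bool /= in sumE.
by rewrite -[w i]mulmx1 -sumE mulmxDr mulmxDl w_Ef mul0mx addr0 -mulmxA Et_j mulmx0.
Qed.

Lemma delta_mx_diag d (k : 'I_d) :
  delta_mx k k = diag_mx (\row_j (j == k)%:R) :> 'M[C]_d.
Proof.
apply/matrixP => i j; rewrite !mxE.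
case: (eqVneq i j) => [<-|ij]; first by rewrite andbb mulr1n.
by rewrite mulr0n; case: eqVneq => [ik|] //=; rewrite -ik eq_sym (negbTE ij).
Qed.

Lemma compl_delta_mx_diag d (k : 'I_d) :
  1%:M - delta_mx k k = diag_mx (\row_j (j != k)%:R) :> 'M[C]_d.
Proof.
apply/matrixP => i j; rewrite !mxE.
case: (eqVneq i j) => [<-|ij].
  by rewrite andbb mulr1n; case: (i == k); rewrite ?subrr ?subr0.
rewrite mulr0n sub0r; case: eqVneq => [ik|] /=; last by rewrite oppr0.
by rewrite -ik eq_sym (negbTE ij) oppr0.
Qed.

Lemma mxtrace_delta d (k : 'I_d) : \tr (delta_mx k k : 'M[C]_d) = 1.
Proof.
rewrite /mxtrace (bigD1 k) //= mxE !eqxx big1 ?addr0 // => i /negbTE ik.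
by rewrite mxE ik.
Qed.

Lemma basis_states_distinguishable d :
  pairwise_distinguishable (@q_effect C d) (fun k : 'I_d => delta_mx k k).
Proof.
move=> i j ij; exists (delta_mx i i); split; last split.
- split; last by rewrite big_bool /= addrC subrK.
  case; [rewrite delta_mx_diag | rewrite compl_delta_mx_diag];
    by apply: psd_diag => k; rewrite mxE ler0n.
- by rewrite /prob mul_delta_mx mxtrace_delta.
- by rewrite /prob mul_delta_mx_0 ?mxtrace0.
Qed.

Lemma qudit_wins_iff n d : wins_PD n (@q_state C d) (@q_effect C d) <-> (n <= d)%N.
Proof.
split=> [[w [state_w win]] | le_nd].
  apply: (orthogonal_family_card (w := w)) => [i|i|i j].
  - exact: (state_w i).1.1.
  - exact: (state_w i).2.
  case: (ltngtP i j) => [lt_ij | lt_ji | /val_inj -> ]; last by rewrite eqxx.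
  - move=> _.
    exact: perfect_strategy_orthogonal (state_w i) (state_w j) (win _ _ lt_ij).
  move=> _; rewrite -(state_w i).1.1 -(state_w j).1.1 -hadjM.
  by rewrite (perfect_strategy_orthogonal (state_w j) (state_w i) (win _ _ lt_ji)) hadj0.
apply: (wins_of_distinguishable (w := fun k : 'I_d => delta_mx k k)).
- by rewrite card_ord.
- move=> k; split; last exact: mxtrace_delta.
  by rewrite delta_mx_diag; apply: psd_diag => j; rewrite mxE ler0n.
- exact: mxtrace_delta.
- exact: basis_states_distinguishable.
Qed.

End Qudits.

Lemma ord2P (i : 'I_2) : i = ord0 \/ i = ord_max.
Proof. by case: i => [[|[|]]] //= ?; [left|right]; apply: val_inj. Qed.

Lemma ord2_neq01 : (ord0 == ord_max :> 'I_2) = false. Proof. by []. Qed.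
Lemma ord2_neq10 : (ord_max == ord0 :> 'I_2) = false. Proof. by []. Qed.

Section Pauli.
Variable C : numClosedFieldType.

Lemma mulCii : ('i : C) * 'i = -1. Proof. by rewrite -expr2 sqrCi. Qed.
Lemma mulV2 : (2 : C)^-1 * 2 = 1. Proof. by rewrite mulVf // pnatr_eq0. Qed.

Lemma sum_ord2 (F : 'I_2 -> C) : \sum_i F i = F ord0 + F ord_max.
Proof. by rewrite big_ord_recl big_ord1; congr (_ + F _); apply: val_inj. Qed.

Lemma mxtrace2 (A : 'M[C]_2) : \tr A = A ord0 ord0 + A ord_max ord_max.
Proof. exact: sum_ord2. Qed.

Definition sgn (s : bool) : C := if s then -1 else 1.

Definition spauli (k : axis) (s : bool) : 'M[C]_2 := sgn s *: pauli C k.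

Definition qproj (k : axis) (s : bool) : 'M[C]_2 := ket C k s *m hadj (ket C k s).

Lemma sgn_real s : conjC (sgn s) = sgn s.
Proof. by case: s; rewrite /sgn ?conjCN conjC1. Qed.

Lemma sgn_sq s : sgn s ^+ 2 = 1.
Proof. by case: s; rewrite /sgn ?sqrrN expr1n. Qed.

Lemma sgn_mul_neq s t : s != t -> sgn t * sgn s = -1.
Proof. by case: s; case: t => //= _; rewrite /sgn ?mulr1 ?mul1r. Qed.

Lemma spauliN k s : - spauli k s = spauli k (~~ s).
Proof. by rewrite /spauli -scaleNr; case: s; rewrite /sgn /= ?opprK. Qed.

Lemma hadj_pauli k : hadj (pauli C k) = pauli C k.
Proof.
apply/matrixP => i j; rewrite hadjE.
case: k; case: (ord2P i) => ->; case: (ord2P j) => ->;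
by rewrite !mxE /= ?ord2_neq01 ?ord2_neq10 /= ?conjCN ?conjCi ?conjC1 ?conjC0 ?opprK.
Qed.

Lemma hadj_spauli k s : hadj (spauli k s) = spauli k s.
Proof. by rewrite /spauli hadjZ sgn_real hadj_pauli. Qed.

Lemma tr_pauli k : \tr (pauli C k) = 0.
Proof. by rewrite mxtrace2; case: k; rewrite !mxE /=; ring. Qed.

Lemma tr_pauli_sq k : \tr (pauli C k *m pauli C k) = 2.
Proof.
rewrite mxtrace2; case: k;
by rewrite !mxE !sum_ord2 !mxE /= ?ord2_neq01 ?ord2_neq10 /=; ring: mulCii.
Qed.

Lemma tr_pauli_orth k k' : k <> k' -> \tr (pauli C k *m pauli C k') = 0.
Proof.
rewrite mxtrace2; case: k; case: k' => // _;
by rewrite !mxE !sum_ord2 !mxE /= ?ord2_neq01 ?ord2_neq10 /=; ring: mulCii.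
Qed.

Lemma qproj_bloch k s : qproj k s = 2^-1 *: (1%:M + spauli k s).
Proof.
have r2 : (2.-root (2 : C))^-1 * (2.-root (2 : C))^-1 = 2^-1.
  by rewrite -invfM -expr2 rootCK.
have r_real : conjC (2.-root (2 : C))^-1 = (2.-root (2 : C))^-1.
  by apply: conj_Creal; rewrite realV ger0_real // rootC_ge0 // ler0n.
apply/matrixP => i j; rewrite /qproj /spauli.
case: k; case: s; case: (ord2P i) => ->; case: (ord2P j) => ->;
rewrite /= !mxE big_ord1 ?hadjE ?mxE /= ?ord2_neq01 ?ord2_neq10 /= ?mulr1n ?mulr0n
  /sgn ?conjCN ?conjCM ?conjCi ?r_real ?conjC1 ?conjC0;
ring: r2 mulCii mulV2.
Qed.

Lemma tr_qproj k s : \tr (qproj k s) = 1.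
Proof.
rewrite qproj_bloch mxtraceZ mxtraceD mxtrace1 /spauli mxtraceZ tr_pauli.
by rewrite mulr0 addr0 mulV2.
Qed.

Lemma tr_qproj_spauli k s s' : \tr (qproj k s *m spauli k s') = sgn s * sgn s'.
Proof.
rewrite qproj_bloch /spauli -scalemxAl mxtraceZ mulmxDl mul1mx mxtraceD.
rewrite -scalemxAr !mxtraceZ -scalemxAl mxtraceZ tr_pauli_sq tr_pauli.
by ring: mulV2.
Qed.

Lemma tr_qproj_spauli_orth k k' s s' : k <> k' ->
  \tr (qproj k s *m spauli k' s') = 0.
Proof.
move=> kk'; rewrite qproj_bloch /spauli -scalemxAl mxtraceZ mulmxDl mul1mx.
rewrite mxtraceD -scalemxAr !mxtraceZ -scalemxAl mxtraceZ tr_pauli_orth //.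
by rewrite tr_pauli; ring.
Qed.

End Pauli.

Section BlochBall.
Variable C : numClosedFieldType.

Definition bloch (A : 'M[C]_2) (k : axis) : C := \tr (A *m pauli C k).

Lemma bloch_real A k : Defs.hermitian A -> bloch A k \is Num.real.
Proof.
by move=> hA; rewrite CrealE /bloch -tr_hadj hadjM hadj_pauli hA mxtrace_mulC.
Qed.

Lemma bloch_sq_ge0 A k : Defs.hermitian A -> 0 <= bloch A k ^+ 2.
Proof. by move=> hA; apply: real_exprn_even_ge0 => //; apply: bloch_real. Qed.

Definition vec2 (x y : C) : 'cV[C]_2 := \col_i (if i == ord0 then x else y).

Lemma qform2 (A : 'M[C]_2) x y : qform A (vec2 x y) =
  conjC x * A ord0 ord0 * x + conjC x * A ord0 ord_max * y
  + conjC y * A ord_max ord0 * x + conjC y * A ord_max ord_max * y.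
Proof. by rewrite qformE !sum_ord2 !mxE /= ?ord2_neq10; ring. Qed.

(* A positive semidefinite 2 x 2 matrix [p z; z* q] has p, q >= 0 and
   |z|^2 <= p q: the quadratic form at (q, -z* ), (-z, p) and (1, -z* ) is
   q (p q - |z|^2), p (p q - |z|^2) and -2 |z|^2 when p = q = 0. *)
Lemma psd2P (A : 'M[C]_2) : psd A ->
  [/\ 0 <= A ord0 ord0, 0 <= A ord_max ord_max,
      A ord_max ord0 = conjC (A ord0 ord_max) &
      A ord0 ord_max * conjC (A ord0 ord_max) <= A ord0 ord0 * A ord_max ord_max].
Proof.
move=> hA; have qA v : 0 <= qform A v := hA.2 v.
set p := A ord0 ord0; set q := A ord_max ord_max; set z := A ord0 ord_max.
have ez : A ord_max ord0 = conjC z by rewrite -(hermitian_entry _ _ hA.1).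
have p0 : 0 <= p.
  have := qA (vec2 1 0); rewrite qform2 conjC1 conjC0.
  by rewrite !(mul0r, mulr0, mul1r, mulr1, addr0, add0r).
have q0 : 0 <= q.
  have := qA (vec2 0 1); rewrite qform2 conjC1 conjC0.
  by rewrite !(mul0r, mulr0, mul1r, mulr1, addr0, add0r).
have cp : conjC p = p by apply: conj_Creal; apply: ger0_real.
have cq : conjC q = q by apply: conj_Creal; apply: ger0_real.
split => //; rewrite -subr_ge0; set D := p * q - z * conjC z.
have qD : 0 <= q * D.
  have := qA (vec2 q (- conjC z)); rewrite qform2 ez -/p -/q -/z conjCN conjCK cq.
  by congr (0 <= _); rewrite /D; ring.
have pD : 0 <= p * D.
  have := qA (vec2 (- z) p); rewrite qform2 ez -/p -/q -/z conjCN cp.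
  by congr (0 <= _); rewrite /D; ring.
have [pq0|pq0] := eqVneq (p + q) 0.
  move/eqP: pq0; rewrite paddr_eq0 // => /andP[/eqP p00 /eqP q00].
  have := qA (vec2 1 (- conjC z)).
  rewrite qform2 ez -/p -/q -/z conjCN conjCK conjC1 p00 q00.
  have -> : 1 * 0 * 1 + 1 * z * - conjC z + - z * conjC z * 1 + - z * 0 * - conjC z
     = 2 * D by rewrite /D p00 q00; ring.
  by rewrite pmulr_rge0 // ltr0n.
have pq_gt0 : 0 < p + q by rewrite lt0r pq0 addr_ge0.
by rewrite -(pmulr_rge0 _ pq_gt0) mulrDl addr_ge0.
Qed.

Lemma psd_tr_ge0 (A : 'M[C]_2) : psd A -> 0 <= \tr A.
Proof. by move=> /psd2P [p0 q0 _ _]; rewrite mxtrace2 addr_ge0. Qed.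

(* The Bloch-ball inequality: the Bloch vector of a positive semidefinite
   A has length at most tr A, since (tr A)^2 - |r|^2 = 4 det A. *)
Lemma bloch_ball (A : 'M[C]_2) : psd A ->
  bloch A ax_x ^+ 2 + bloch A ax_y ^+ 2 + bloch A ax_z ^+ 2 <= \tr A ^+ 2.
Proof.
move=> hA; have [p0 q0 ez det0] := psd2P hA; rewrite -subr_ge0 in det0.
rewrite /bloch !mxtrace2 !mxE !sum_ord2 !mxE /= ?ord2_neq01 ?ord2_neq10 /= ez.
set p := A ord0 ord0; set q := A ord_max ord_max; set z := A ord0 ord_max.
rewrite -subr_ge0.
have -> : (p + q) ^+ 2 -
   ((p * 0 + z * 1 + (conjC z * 1 + q * 0)) ^+ 2 +
    (p * 0 + z * 'i + (conjC z * - 'i + q * 0)) ^+ 2 +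
    (p * 1 + z * 0 + (conjC z * 0 + q * -1)) ^+ 2)
  = 4 * (p * q - z * conjC z) by ring: (mulCii C).
exact: mulr_ge0.
Qed.

Lemma bloch_le_tr (A : 'M[C]_2) k : psd A -> bloch A k ^+ 2 <= \tr A ^+ 2.
Proof.
move=> hA; apply: le_trans (bloch_ball hA).
have sq k' := bloch_sq_ge0 k' hA.1.
case: k.
- by rewrite -addrA lerDl addr_ge0.
- by rewrite [X in X + _]addrC -addrA lerDl addr_ge0.
- by rewrite lerDr addr_ge0.
Qed.

Lemma bloch_pair_le_tr (A : 'M[C]_2) k k' : psd A -> k <> k' ->
  bloch A k ^+ 2 + bloch A k' ^+ 2 <= \tr A ^+ 2.
Proof.
move=> hA kk'; apply: le_trans (bloch_ball hA).
have sq k'' := bloch_sq_ge0 k'' hA.1.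
case: k kk'; case: k' => // _.
- by rewrite lerDl.
- by rewrite [X in _ <= X]addrAC lerDl.
- by rewrite [X in X <= _]addrC lerDl.
- by rewrite -addrA lerDr.
- by rewrite [X in X <= _]addrC [X in _ <= X]addrAC lerDl.
- by rewrite [X in X <= _]addrC -addrA lerDr.
Qed.

End BlochBall.

(* An elementary inequality behind all our SEP effects: if (x, y) and (u, v)
   are real vectors of lengths at most a and b, then xu + yv >= -ab
   (by Lagrange's identity (ab)^2 - (xu + yv)^2 >= (xv - yu)^2 >= 0). *)
Lemma dot2_ge_neg_prod (R : numDomainType) (a b x y u v : R) :
  x \is Num.real -> y \is Num.real -> u \is Num.real -> v \is Num.real ->
  0 <= a -> 0 <= b -> x ^+ 2 + y ^+ 2 <= a ^+ 2 -> u ^+ 2 + v ^+ 2 <= b ^+ 2 ->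
  0 <= a * b + (x * u + y * v).
Proof.
move=> rx ry ru rv a0 b0 xy_le uv_le; set w := x * u + y * v.
have rw : w \is Num.real by rewrite rpredD ?rpredM.
have sq_ge0 r : r \is Num.real -> 0 <= r ^+ 2.
  by move=> rr; apply: real_exprn_even_ge0.
have lagrange : (a * b) ^+ 2 - w ^+ 2 = (a ^+ 2 - (x ^+ 2 + y ^+ 2)) * b ^+ 2
    + (x ^+ 2 + y ^+ 2) * (b ^+ 2 - (u ^+ 2 + v ^+ 2)) + (x * v - y * u) ^+ 2.
  by rewrite /w; ring.
have w2_le : w ^+ 2 <= (a * b) ^+ 2.
  rewrite -subr_ge0 lagrange; apply: addr_ge0; last by rewrite sq_ge0 ?rpredB ?rpredM.
  by apply: addr_ge0; apply: mulr_ge0; rewrite ?subr_ge0 ?exprn_ge0 ?addr_ge0 ?sq_ge0.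
have : `|w| <= a * b.
  by rewrite -ler_sqr ?nnegrE ?normr_ge0 ?mulr_ge0 // real_normK.
by case/(real_ler_normlP rw) => + _; rewrite -subr_ge0 opprK.
Qed.

Section SepEffects.
Variable C : numClosedFieldType.

Lemma mxtrace_tens m n (A : 'M[C]_m) (B : 'M[C]_n) : \tr (A *t B) = \tr A * \tr B.
Proof. by rewrite /mxtrace mulr_sum; apply: eq_bigr => k _; rewrite mxE. Qed.

Lemma mxtrace_tens_mul m n (A P : 'M[C]_m) (B Q : 'M[C]_n) :
  \tr ((A *t B) *m (P *t Q)) = \tr (A *m P) * \tr (B *m Q).
Proof. by rewrite tensmx_mul mxtrace_tens. Qed.

Lemma tensmxNl m n p q (A : 'M[C]_(m, n)) (B : 'M[C]_(p, q)) :
  (- A) *t B = - (A *t B).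
Proof. by apply/matrixP => i j; rewrite !mxE mulNr. Qed.

Lemma tensmxNr m n p q (A : 'M[C]_(m, n)) (B : 'M[C]_(p, q)) :
  A *t (- B) = - (A *t B).
Proof. by apply/matrixP => i j; rewrite !mxE mulrN. Qed.

Lemma tr_mul_spauli (A : 'M[C]_2) k s : \tr (A *m spauli C k s) = sgn C s * bloch A k.
Proof. by rewrite /spauli -scalemxAr mxtraceZ. Qed.

Lemma sgn_is_real s : sgn C s \is Num.real.
Proof. by case: s; rewrite /sgn ?realN real1. Qed.

Definition sep_observable (M : 'M[C]_(2 * 2)) : Prop :=
  hadj M = M /\ forall A B : 'M[C]_2, psd A -> psd B ->
    0 <= \tr (A *t B) + \tr ((A *t B) *m M).

Lemma sep_observable_effect M : sep_observable M -> sep2_effect (2^-1 *: (1%:M + M)).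
Proof.
move=> [hM M_ge]; split.
  have half_real : conjC (2^-1 : C) = 2^-1.
    by apply: conj_Creal; rewrite realV ger0_real // ler0n.
  by rewrite /Defs.hermitian hadjZ half_real hadjD hadj1 hM.
move=> X [m [A [B [psdAB ->]]]].
rewrite mulmx_suml raddf_sum /=; apply: sumr_ge0 => i _.
rewrite -scalemxAr mxtraceZ mulmxDr mulmx1 mxtraceD.
by rewrite mulr_ge0 ?invr_ge0 ?ler0n // M_ge //; case: (psdAB i).
Qed.

Definition obs_left k s : 'M[C]_(2 * 2) := spauli C k s *t 1%:M.

Definition obs_right k s : 'M[C]_(2 * 2) := 1%:M *t spauli C k s.

Definition obs_corr k k' s1 s2 t1 t2 : 'M[C]_(2 * 2) :=
  spauli C k s1 *t spauli C k s2 - spauli C k' t1 *t spauli C k' t2.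

Lemma obs_leftN k s : - obs_left k s = obs_left k (~~ s).
Proof. by rewrite /obs_left -tensmxNl spauliN. Qed.

Lemma obs_rightN k s : - obs_right k s = obs_right k (~~ s).
Proof. by rewrite /obs_right -tensmxNr spauliN. Qed.

Lemma obs_corrN k k' s1 s2 t1 t2 :
  - obs_corr k k' s1 s2 t1 t2 = obs_corr k' k t1 t2 s1 s2.
Proof. by rewrite /obs_corr opprB. Qed.

(* All three kinds of observables are SEP observables: their expectation
   on A (x) B is a dot product of Bloch coordinates, bounded below by
   -tr A tr B through dot2_ge_neg_prod and the Bloch-ball inequality. *)
Lemma sep_obs_left k s : sep_observable (obs_left k s).
Proof.
split; first by rewrite /obs_left hadj_tens hadj_spauli hadj1.
move=> A B psdA psdB.
rewrite /obs_left mxtrace_tens_mul mulmx1 tr_mul_spauli mxtrace_tens.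
have := dot2_ge_neg_prod (y := 0) (v := 0) (x := sgn C s * bloch A k)
  (u := \tr B) _ (real0 C) _ (real0 C) (psd_tr_ge0 psdA) (psd_tr_ge0 psdB) _ _.
rewrite !mul0r addr0 mulrC; apply.
- by rewrite realM ?sgn_is_real ?bloch_real //; case: psdA.
- by rewrite ger0_real // psd_tr_ge0.
- by rewrite expr0n addr0 exprMn sgn_sq ?mul1r ?mulr1 bloch_le_tr.
- by rewrite expr0n addr0.
Qed.

Lemma sep_obs_right k s : sep_observable (obs_right k s).
Proof.
split; first by rewrite /obs_right hadj_tens hadj_spauli hadj1.
move=> A B psdA psdB.
rewrite /obs_right mxtrace_tens_mul mulmx1 tr_mul_spauli mxtrace_tens.
have := dot2_ge_neg_prod (y := 0) (v := 0) (x := \tr A)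
  (u := sgn C s * bloch B k) _ (real0 C) _ (real0 C)
  (psd_tr_ge0 psdA) (psd_tr_ge0 psdB) _ _.
rewrite !mul0r addr0; apply.
- by rewrite ger0_real // psd_tr_ge0.
- by rewrite realM ?sgn_is_real ?bloch_real //; case: psdB.
- by rewrite expr0n addr0.
- by rewrite expr0n addr0 exprMn sgn_sq ?mul1r ?mulr1 bloch_le_tr.
Qed.

Lemma sep_obs_corr k k' s1 s2 t1 t2 : k <> k' ->
  sep_observable (obs_corr k k' s1 s2 t1 t2).
Proof.
move=> kk'; split; first by rewrite /obs_corr hadjD hadjN !hadj_tens !hadj_spauli.
move=> A B psdA psdB.
rewrite /obs_corr mulmxBr raddfB /= !mxtrace_tens_mul !tr_mul_spauli mxtrace_tens.
have [rAk rAk'] := (bloch_real k psdA.1, bloch_real k' psdA.1).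
have [rBk rBk'] := (bloch_real k psdB.1, bloch_real k' psdB.1).
have := dot2_ge_neg_prod (x := sgn C s1 * sgn C s2 * bloch A k)
  (y := - (sgn C t1 * sgn C t2 * bloch A k')) (u := bloch B k) (v := bloch B k')
  _ _ rBk rBk' (psd_tr_ge0 psdA) (psd_tr_ge0 psdB) _ (bloch_pair_le_tr psdB kk').
have -> : sgn C s1 * sgn C s2 * bloch A k * bloch B k
    + - (sgn C t1 * sgn C t2 * bloch A k') * bloch B k'
  = sgn C s1 * bloch A k * (sgn C s2 * bloch B k)
    - sgn C t1 * bloch A k' * (sgn C t2 * bloch B k') by ring.
apply.
- by rewrite !realM ?sgn_is_real.
- by rewrite realN !realM ?sgn_is_real.
- by rewrite sqrrN !exprMn !sgn_sq !mul1r bloch_pair_le_tr.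
Qed.

Lemma distinguished_by_observable (wi wj M : 'M[C]_(2 * 2)) :
  sep_observable M -> sep_observable (- M) ->
  \tr wi = 1 -> \tr wj = 1 -> \tr (wi *m M) = 1 -> \tr (wj *m M) = -1 ->
  exists E, measurement (@sep2_effect C) (fun b : bool => if b then E else 1%:M - E)
     /\ prob E wi = 1 /\ prob E wj = 0.
Proof.
move=> obsM obsNM tr_i tr_j Mi Mj; exists (2^-1 *: (1%:M + M)).
have prob_half w : prob (2^-1 *: (1%:M + M)) w = 2^-1 * (\tr w + \tr (w *m M)).
  by rewrite /prob mxtrace_mulC -scalemxAr mxtraceZ mulmxDr mulmx1 mxtraceD.
have compl : 1%:M - 2^-1 *: (1%:M + M) = 2^-1 *: (1%:M + - M).
  by apply/matrixP => i j; rewrite !mxE; field.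
split; [split|split].
- by case; rewrite ?compl; apply: sep_observable_effect.
- by rewrite big_bool /= addrC subrK.
- by rewrite prob_half tr_i Mi; field.
- by rewrite prob_half tr_j Mj; ring.
Qed.

End SepEffects.

Section FamilyA.
Variable C : numClosedFieldType.

Lemma stateA_tens k s1 s2 : stateA C k s1 s2 = qproj C k s1 *t qproj C k s2.
Proof. by rewrite /stateA /prod_ket hadj_tens tensmx_mul. Qed.

Lemma tr_stateA k s1 s2 : \tr (stateA C k s1 s2) = 1.
Proof. by rewrite stateA_tens mxtrace_tens !tr_qproj mulr1. Qed.

Lemma sep2_stateA k s1 s2 : sep2_state (stateA C k s1 s2).
Proof.
split; last exact: tr_stateA.
exists 1%N, (fun _ => qproj C k s1), (fun _ => qproj C k s2); split.
  by move=> _; split; apply: psd_rank1.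
by rewrite big_ord1 stateA_tens.
Qed.

Lemma obs_left_stateA k s1 s2 u :
  \tr (stateA C k s1 s2 *m obs_left C k u) = sgn C s1 * sgn C u.
Proof. by rewrite stateA_tens mxtrace_tens_mul mulmx1 tr_qproj tr_qproj_spauli mulr1. Qed.

Lemma obs_right_stateA k s1 s2 u :
  \tr (stateA C k s1 s2 *m obs_right C k u) = sgn C s2 * sgn C u.
Proof. by rewrite stateA_tens mxtrace_tens_mul mulmx1 tr_qproj tr_qproj_spauli mul1r. Qed.

Lemma obs_corr_stateA k k' s1 s2 t1 t2 : k <> k' ->
  \tr (stateA C k s1 s2 *m obs_corr C k k' s1 s2 t1 t2) = 1.
Proof.
move=> kk'; rewrite stateA_tens /obs_corr mulmxBr raddfB /= !mxtrace_tens_mul.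
rewrite !tr_qproj_spauli (tr_qproj_spauli_orth _ _ _ kk').
by rewrite -!expr2 !sgn_sq mul0r subr0 mulr1.
Qed.

Lemma axis_of_inj (i j : 'I_3) : i != j -> axis_of i <> axis_of j.
Proof.
by case: i => [[|[|[|i]]] hi] //; case: j => [[|[|[|j]]] hj] //=; rewrite -val_eqE.
Qed.

(* The twelve states of A are pairwise distinguishable by SEP measurements:
   states on different axes k, k' are separated by
   σ_k (x) σ_k - σ_k' (x) σ_k' with suitable signs, and states on the same
   axis by a local observable on a qubit where their labels differ. *)
Lemma familyA_distinguishable : pairwise_distinguishable (@sep2_effect C) (familyA C).
Proof.
move=> [[ik s1] s2] [[jk t1] t2] ij; rewrite /familyA /=.
set k := axis_of ik; set k' := axis_of jk.
have [eq_ik|ne_ik] := eqVneq ik jk.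
  rewrite /k' -eq_ik -/k; rewrite eq_ik in ij.
  have [eq_s1|ne_s1] := eqVneq s1 t1.
    have ne_s2 : s2 != t2 by apply: contra ij; rewrite eq_s1 => /eqP ->.
    apply: (distinguished_by_observable (sep_obs_right C k s2));
      rewrite ?obs_rightN ?tr_stateA ?obs_right_stateA //.
    - exact: sep_obs_right.
    - by rewrite -expr2 sgn_sq.
    - by rewrite sgn_mul_neq.
  apply: (distinguished_by_observable (sep_obs_left C k s1));
    rewrite ?obs_leftN ?tr_stateA ?obs_left_stateA //.
  - exact: sep_obs_left.
  - by rewrite -expr2 sgn_sq.
  - by rewrite sgn_mul_neq.
have kk' := axis_of_inj ne_ik.
have k'k : k' <> k by move=> /esym.
apply: (distinguished_by_observable (sep_obs_corr C s1 s2 t1 t2 kk'));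
  rewrite ?obs_corrN ?tr_stateA ?obs_corr_stateA //.
- exact: sep_obs_corr k'k.
- by rewrite -obs_corrN mulmxN raddfN /= obs_corr_stateA.
Qed.

End FamilyA.

Lemma twelve_le_exp2 k : (12 <= 2 ^ k)%N -> (4 <= k)%N.
Proof. by case: k => [|[|[|[|k]]]]. Qed.

Theorem theorem1 (C : numClosedFieldType) :
  (* (i) quantum qubits *)
  ( ~ wins_PD_qubits C 12 3 /\ wins_PD_qubits C 12 4 /\
    (forall k : nat, wins_PD_qubits C 12 k -> (4 <= k)%N) ) /\
  (* (ii) two SEP-bits *)
  ( (forall p, sep2_state (familyA C p)) /\
    pairwise_distinguishable (@sep2_effect C) (familyA C) /\
    wins_PD_sep2 C 12 ).
Proof.
have qubits_iff k : wins_PD_qubits C 12 k <-> (12 <= 2 ^ k)%N by apply: qudit_wins_iff.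
have stateA_p (p : 'I_3 * bool * bool) : sep2_state (familyA C p) by apply: sep2_stateA.
split.
  split; first by move/qubits_iff.
  split; first exact/qubits_iff.
  by move=> k /qubits_iff /twelve_le_exp2.
split; first exact: stateA_p.
split; first exact: familyA_distinguishable.
apply: (wins_of_distinguishable (w := familyA C)).
- by rewrite !card_prod card_ord card_bool.
- exact: stateA_p.
- by move=> p; case: (stateA_p p).
- exact: familyA_distinguishable.
Qed.
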